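(* For $N\in\mathbb N$ let $S_N=1+\frac{N+1}{2N}$, $x_{N,k}=\frac{k}{N^2}$ and $\lambda_{N,k}=\frac{1}{S_N}\left(1+\frac kN\right)\frac1N$ for $k=1,\dots,N$. Let $V_{N,1},\dots,V_{N,N}$ solve the deterministic system $$\frac{d}{dt}V_{N,k}(t)=\sum_{j\neq k}\frac{2(\lambda_{N,k}+\lambda_{N,j})}{V_{N,k}(t)-V_{N,j}(t)},\qquad V_{N,k}(0)=x_{N,k},$$ and let $\alpha_{N,t}=\sum_{k=1}^N\lambda_{N,k}\delta_{V_{N,k}(t)}$. Then there exists $f\in C^2_b(\mathbb R,\mathbb C)$ such that the sequence $\left(\frac{d}{dt}\int_{\mathbb R}f(x)\,d\alpha_{N,t}(x)\Big|_{t=0}\right)_{N\in\mathbb N}$ is unbounded.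
   Context: $C^2_b(\mathbb R,\mathbb C)$ denotes the twice continuously differentiable functions $f:\mathbb R\to\mathbb C$ with $f,f',f''$ bounded. $\delta_x$ is the unit point mass at $x$. *)

From Stdlib Require Import Reals.
From Coquelicot Require Import Coquelicot.
Open Scope R_scope.

Definition is_rderive {V : NormedModule R_AbsRing} (g : R -> V) (x : R) (l : V) : Prop :=
  filterlim (fun h : R => scal (/ h) (minus (g (x + h)) (g x))) (at_right 0) (locally l).

Definition C2b (f : R -> C) : Prop :=
  exists (f1 f2 : R -> C),
    (forall x, is_derive f x (f1 x)) /\
    (forall x, is_derive f1 x (f2 x)) /\
    (forall x, continuous f2 x) /\
    exists B : R, forall x, Cmod (f x) <= B /\ Cmod (f1 x) <= B /\ Cmod (f2 x) <= B.

Definition S_ (N : nat) : R := 1 + (INR N + 1) / (2 * INR N).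
Definition x_ (N k : nat) : R := INR k / (INR N ^ 2).
Definition lam (N k : nat) : R := / S_ N * (1 + INR k / INR N) * / INR N.

Definition drift (N : nat) (V : nat -> R -> R) (k : nat) (t : R) : R :=
  sum_n_m (fun j => if Nat.eqb j k then 0
                    else 2 * (lam N k + lam N j) / (V k t - V j t)) 1 N.

Definition solves (N : nat) (V : nat -> R -> R) : Prop :=
  exists T : R, 0 < T /\
    forall k : nat, (1 <= k <= N)%nat ->
      V k 0 = x_ N k /\
      is_rderive (V k) 0 (drift N V k 0) /\
      (forall t, 0 < t < T -> is_derive (V k) t (drift N V k t)).

(** integral of f against alpha_{N,t} = sum_k lam_{N,k} delta_{V_{N,k}(t)}. *)
Definition int_alpha (N : nat) (V : nat -> R -> R) (f : R -> C) (t : R) : C :=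
  sum_n_m (fun k => (RtoC (lam N k) * f (V k t))%C) 1 N.

From Stdlib Require Import Reals Lra Lia.
From Coquelicot Require Import Coquelicot.
Open Scope R_scope.

(* Take f = sin.  At t = 0 the derivative of the integral of f against alpha_{N,t} is
   sum_k lam_k cos(x_k) sum_{j<>k} 2 (lam_k + lam_j) / (x_k - x_j); the pair weights are
   antisymmetric, so this is the sum over pairs j < k of
   2 (lam_k + lam_j) / (x_k - x_j) * (lam_k cos x_k - lam_j cos x_j).
   Since lam_k = (1/N + x_k) / S_N grows in x_k with slope 1/S_N >= 1/2, while cos is
   1-Lipschitz and close to 1 on [0, 1/N], the bracket is at least (x_k - x_j) / 4, so
   each of the N (N - 1) / 2 pairs contributes at least 1 / (2N): the derivative is at
   least (N - 1) / 4. *)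

Lemma is_rderive_R (g : R -> R) x l :
  is_rderive g x l <->
  filterlim (fun h => (g (x + h) - g x) / h) (at_right 0) (locally l).
Proof.
  split; apply filterlim_ext; intro h; unfold Rdiv; apply Rmult_comm.
Qed.

Lemma filterlim_Rplus_fct {T} (F : (T -> Prop) -> Prop) {FF : Filter F} (f g : T -> R) a b :
  filterlim f F (locally a) -> filterlim g F (locally b) ->
  filterlim (fun t => f t + g t) F (locally (a + b)).
Proof.
  intros Hf Hg. eapply filterlim_comp_2; [exact Hf | exact Hg |].
  exact (@filterlim_plus R_AbsRing R_NormedModule a b).
Qed.

Lemma filterlim_Rmult_fct {T} (F : (T -> Prop) -> Prop) {FF : Filter F} (f g : T -> R) a b :
  filterlim f F (locally a) -> filterlim g F (locally b) ->
  filterlim (fun t => f t * g t) F (locally (a * b)).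
Proof.
  intros Hf Hg. eapply filterlim_comp_2; [exact Hf | exact Hg |].
  exact (@filterlim_mult R_AbsRing a b).
Qed.

Lemma filterlim_at_right_id : filterlim (fun h : R => h) (at_right 0) (locally 0).
Proof. intros P [e He]. exists e. intros y Hy _. apply He, Hy. Qed.

Lemma is_rderive_continuous (g : R -> R) x l :
  is_rderive g x l -> filterlim (fun h => g (x + h)) (at_right 0) (locally (g x)).
Proof.
  intro Hg. apply is_rderive_R in Hg.
  apply filterlim_ext_loc with (fun h => g x + h * ((g (x + h) - g x) / h)).
  - exists (mkposreal _ Rlt_0_1). intros h _ Hh. field. lra.
  - assert (H := filterlim_Rplus_fct _ _ _ _ _ (filterlim_const (g x))
      (filterlim_Rmult_fct _ _ _ _ _ filterlim_at_right_id Hg)).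
    rewrite Rmult_0_l, Rplus_0_r in H. exact H.
Qed.

Lemma is_rderive_comp (g phi : R -> R) x d l :
  is_rderive g x d -> is_derive phi (g x) l -> is_rderive (fun t => phi (g t)) x (l * d).
Proof.
  intros Hg Hphi. apply is_derive_Reals in Hphi.
  (* Caratheodory's slope of phi at g x is continuous there, so only the right
     continuity of g is needed. *)
  set (slope := fun y => if Req_EM_T y (g x) then l else (phi y - phi (g x)) / (y - g x)).
  assert (Hslope : filterlim slope (locally (g x)) (locally l)).
  { intros P [eps HP]. destruct (Hphi eps (cond_pos eps)) as [del Hdel].
    exists del. intros y Hy. apply HP. unfold slope.
    destruct (Req_EM_T y (g x)) as [_ | Hne]; [apply ball_center |].
    replace y with (g x + (y - g x)) at 1 by ring.
    apply Hdel; [lra | exact Hy]. }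
  apply is_rderive_R.
  apply filterlim_ext_loc with (fun h => slope (g (x + h)) * ((g (x + h) - g x) / h)).
  - exists (mkposreal _ Rlt_0_1). intros h _ Hh. unfold slope.
    destruct (Req_EM_T (g (x + h)) (g x)) as [E | E].
    + rewrite E. field. lra.
    + field. lra.
  - apply (filterlim_Rmult_fct (at_right 0)).
    + eapply filterlim_comp; [exact (is_rderive_continuous g x d Hg) | exact Hslope].
    + apply is_rderive_R, Hg.
Qed.

Lemma is_rderive_ext {V : NormedModule R_AbsRing} (f g : R -> V) x l :
  (forall t, f t = g t) -> is_rderive f x l -> is_rderive g x l.
Proof. intro Hfg. apply filterlim_ext. intro h. now rewrite !Hfg. Qed.

Lemma is_rderive_const (c x : R) : is_rderive (fun _ => c) x 0.
Proof.
  apply is_rderive_R, (filterlim_ext (fun _ => 0)); [| apply filterlim_const].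
  intro h. unfold Rdiv. ring.
Qed.

Lemma is_rderive_plus (f g : R -> R) x lf lg :
  is_rderive f x lf -> is_rderive g x lg -> is_rderive (fun t => f t + g t) x (lf + lg).
Proof.
  rewrite !is_rderive_R. intros Hf Hg.
  apply (filterlim_ext (fun h => (f (x + h) - f x) / h + (g (x + h) - g x) / h)).
  - intro h. unfold Rdiv. ring.
  - now apply (filterlim_Rplus_fct (at_right 0)).
Qed.

Lemma is_rderive_sum_n_m (F : nat -> R -> R) (L : nat -> R) x n m :
  (forall k, (n <= k <= m)%nat -> is_rderive (F k) x (L k)) ->
  is_rderive (fun t => sum_n_m (fun k => F k t) n m) x (sum_n_m L n m).
Proof.
  assert (Hempty : forall p, (p < n)%nat ->
    is_rderive (fun t => sum_n_m (fun k => F k t) n p) x (sum_n_m L n p)).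
  { intros p Hp. rewrite sum_n_m_zero by exact Hp.
    apply (is_rderive_ext (fun _ => 0)); [| apply is_rderive_const].
    intro t. rewrite sum_n_m_zero by exact Hp. reflexivity. }
  induction m as [| m IH]; intro HF.
  - destruct n as [| n]; [| apply Hempty; lia].
    rewrite sum_n_n. apply (is_rderive_ext (F 0%nat)); [| apply HF; lia].
    intro t. now rewrite sum_n_n.
  - destruct (Compare_dec.le_lt_dec n (S m)) as [Hnm | Hnm]; [| now apply Hempty].
    rewrite sum_n_Sm by exact Hnm.
    apply (is_rderive_ext (fun t => sum_n_m (fun k => F k t) n m + F (S m) t)).
    + intro t. now rewrite sum_n_Sm.
    + apply is_rderive_plus; [apply IH | apply HF]; intros; try apply HF; lia.
Qed.

Lemma is_rderive_linear {U V : NormedModule R_AbsRing} (lin : U -> V) (g : R -> U) x l :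
  is_linear lin -> is_rderive g x l -> is_rderive (fun t => lin (g t)) x (lin l).
Proof.
  intros Hlin Hg.
  apply (filterlim_ext (fun h => lin (scal (/ h) (minus (g (x + h)) (g x))))).
  - intro h. now rewrite linear_scal, linear_minus.
  - eapply filterlim_comp; [exact Hg | apply linear_cont, Hlin].
Qed.

Lemma is_derive_linear {V W : NormedModule R_AbsRing} (lin : V -> W) (g : R -> V) x l :
  is_linear lin -> is_derive g x l -> is_derive (fun t => lin (g t)) x (lin l).
Proof.
  intros Hlin Hg. eapply filterdiff_ext_lin.
  - eapply filterdiff_comp; [exact Hg | apply filterdiff_linear, Hlin].
  - intro y. simpl. apply linear_scal, Hlin.
Qed.

Lemma is_linear_RtoC : @is_linear R_AbsRing R_NormedModule C_R_NormedModule RtoC.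
Proof.
  apply (is_linear_ext (fun k : R => scal k (RtoC 1))).
  - intro k. now rewrite scal_R_Cmult, Cmult_1_r.
  - exact (is_linear_scal_l (K := R_AbsRing) (V := C_R_NormedModule) (RtoC 1)).
Qed.

Lemma C2b_sin : C2b (fun x => RtoC (sin x)).
Proof.
  exists (fun x => RtoC (cos x)), (fun x => RtoC (- sin x)).
  split; [| split; [| split]].
  - intro x. apply (is_derive_linear RtoC sin x (cos x) is_linear_RtoC).
    apply is_derive_Reals, derivable_pt_lim_sin.
  - intro x. apply (is_derive_linear RtoC cos x (- sin x) is_linear_RtoC).
    apply is_derive_Reals, derivable_pt_lim_cos.
  - intro x. apply (continuous_comp (fun y => - sin y) RtoC).
    + apply continuity_pt_filterlim, continuity_pt_opp, continuity_sin.
    + exact (linear_cont RtoC (- sin x) is_linear_RtoC).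
  - exists 1. intro x. rewrite !Cmod_R, Rabs_Ropp.
    destruct (SIN_bound x), (COS_bound x). repeat split; apply Rabs_le; lra.
Qed.

Lemma sum_n_Sm_R (a : nat -> R) n m :
  (n <= S m)%nat -> sum_n_m a n (S m) = sum_n_m a n m + a (S m).
Proof. exact (sum_n_Sm a n m). Qed.

Lemma sum_n_m_le_loc (a b : nat -> R) n m :
  (forall k, (n <= k <= m)%nat -> a k <= b k) -> sum_n_m a n m <= sum_n_m b n m.
Proof.
  intro Hab. destruct (Compare_dec.le_lt_dec n m) as [Hnm | Hnm].
  - induction Hnm as [| m Hnm IH].
    + rewrite !sum_n_n. apply Hab. lia.
    + rewrite !sum_n_Sm_R by lia.
      apply Rplus_le_compat; [apply IH | apply Hab]; intros; try apply Hab; lia.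
  - rewrite !sum_n_m_zero by exact Hnm. apply Rle_refl.
Qed.

Lemma sum_offdiag_antisym (a : nat -> nat -> R) (g : nat -> R) N :
  (forall k j, a j k = - a k j) ->
  sum_n_m (fun k => g k * sum_n_m (fun j => if Nat.eqb j k then 0 else a k j) 1 N) 1 N =
  sum_n_m (fun k => sum_n_m (fun j => a k j * (g k - g j)) 1 (k - 1)) 1 N :> R.
Proof.
  intro Hanti. induction N as [| N IH]; [now rewrite !sum_n_m_zero by lia |].
  assert (Hcolumn :
    sum_n_m (fun k => g k * sum_n_m (fun j => if Nat.eqb j k then 0 else a k j) 1 (S N)) 1 N
    = sum_n_m (fun k => g k * sum_n_m (fun j => if Nat.eqb j k then 0 else a k j) 1 N) 1 N
      + sum_n_m (fun k => g k * a k (S N)) 1 N).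
  { rewrite <- (sum_n_m_plus (G := R_AbelianMonoid)). apply sum_n_m_ext_loc. intros k Hk.
    rewrite sum_n_Sm_R by lia.
    replace (Nat.eqb (S N) k) with false by (symmetry; apply Nat.eqb_neq; lia).
    apply Rmult_plus_distr_l. }
  assert (Hrow : sum_n_m (fun j => if Nat.eqb j (S N) then 0 else a (S N) j) 1 (S N)
    = sum_n_m (fun j => a (S N) j) 1 N).
  { rewrite sum_n_Sm_R, Nat.eqb_refl, Rplus_0_r by lia. apply sum_n_m_ext_loc. intros j Hj.
    now replace (Nat.eqb j (S N)) with false by (symmetry; apply Nat.eqb_neq; lia). }
  assert (Hpairs : sum_n_m (fun j => a (S N) j * (g (S N) - g j)) 1 N
    = g (S N) * sum_n_m (fun j => a (S N) j) 1 N + sum_n_m (fun k => g k * a k (S N)) 1 N).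
  { rewrite <- (sum_n_m_mult_l (K := R_Ring)), <- (sum_n_m_plus (G := R_AbelianMonoid)).
    apply sum_n_m_ext. intro k.
    assert (Hterm : a (S N) k * (g (S N) - g k) = g (S N) * a (S N) k + g k * a k (S N))
      by (rewrite (Hanti (S N) k); ring).
    exact Hterm. }
  rewrite (sum_n_Sm_R (fun k => g k * sum_n_m (fun j => if Nat.eqb j k then 0 else a k j) 1 (S N))),
    (sum_n_Sm_R (fun k => sum_n_m (fun j => a k j * (g k - g j)) 1 (k - 1))) by lia.
  rewrite Nat.sub_succ, Nat.sub_0_r, Hcolumn, Hrow, IH, Hpairs. ring.
Qed.

Lemma sum_n_m_RtoC (a : nat -> R) n m :
  sum_n_m (fun k => RtoC (a k)) n m = RtoC (sum_n_m a n m).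
Proof.
  destruct (Compare_dec.le_lt_dec n m) as [Hnm | Hnm];
    [| now rewrite !sum_n_m_zero by exact Hnm].
  induction Hnm as [| m Hnm IH]; [now rewrite !sum_n_n |].
  rewrite !sum_n_Sm, IH by lia. symmetry. apply RtoC_plus.
Qed.

Lemma sum_triangle_lower_bound (b : nat -> nat -> R) c N :
  (forall k j, (1 <= j < k)%nat -> (k <= N)%nat -> c <= b k j) ->
  c * INR N * (INR N - 1) / 2 <= sum_n_m (fun k => sum_n_m (b k) 1 (k - 1)) 1 N.
Proof.
  intro Hb.
  apply Rle_trans with (sum_n_m (fun k => sum_n_m (fun _ => c) 1 (k - 1)) 1 N);
    [| apply sum_n_m_le_loc; intros k Hk; apply sum_n_m_le_loc; intros j Hj; apply Hb; lia].
  right. clear Hb. induction N as [| N IH].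
  - rewrite sum_n_m_zero by lia. simpl. unfold zero; simpl. field.
  - rewrite sum_n_Sm_R, <- IH, sum_n_m_const, S_INR by lia.
    replace (S (S N - 1) - 1)%nat with N by lia. field.
Qed.

Lemma cos_lipschitz p q : Rabs (cos p - cos q) <= Rabs (p - q).
Proof.
  destruct (MVT_abs cos (fun y => - sin y) q p) as [c [Hc _]].
  { intros c _. apply derivable_pt_lim_cos. }
  rewrite Hc, Rabs_Ropp. rewrite <- (Rmult_1_l (Rabs (p - q))) at 2.
  apply Rmult_le_compat_r; [apply Rabs_pos |]. apply Rabs_le, SIN_bound.
Qed.

Lemma INR_ge_1 N : (1 <= N)%nat -> 1 <= INR N.
Proof. intro HN. apply (le_INR 1), HN. Qed.

Lemma S_bounds N : (1 <= N)%nat -> 1 <= S_ N <= 2.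
Proof.
  intro HN. assert (Hn := INR_ge_1 N HN). unfold S_.
  assert (0 <= (INR N + 1) / (2 * INR N) <= 1); [| lra].
  split; [apply Rle_div_r | apply Rle_div_l]; lra.
Qed.

Lemma lam_eq_x N k : (1 <= N)%nat -> lam N k = (/ INR N + x_ N k) / S_ N.
Proof.
  intro HN. assert (Hn := INR_ge_1 N HN). assert (HS := S_bounds N HN).
  unfold lam, x_. field. lra.
Qed.

Lemma x_bounds N k : (1 <= N)%nat -> (k <= N)%nat -> 0 <= x_ N k <= / INR N.
Proof.
  intros HN HkN. assert (Hn := INR_ge_1 N HN). assert (Hk := le_INR _ _ HkN).
  assert (H0k := pos_INR k). unfold x_.
  replace (/ INR N) with (INR N / INR N ^ 2) by (field; lra).
  assert (0 < / INR N ^ 2) by (apply Rinv_0_lt_compat; nra).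
  split; [apply Rmult_le_pos | apply Rmult_le_compat_r]; lra.
Qed.

Lemma x_increasing N j k : (1 <= N)%nat -> (j < k)%nat -> x_ N j < x_ N k.
Proof.
  intros HN Hjk. assert (Hn := INR_ge_1 N HN). unfold x_.
  apply Rmult_lt_compat_r; [apply Rinv_0_lt_compat; nra | apply lt_INR, Hjk].
Qed.

Definition cos_weight (N k : nat) : R := lam N k * cos (x_ N k).

Definition pair_rate (N k j : nat) : R := 2 * (lam N k + lam N j) / (x_ N k - x_ N j).

Lemma cos_weight_increment N j k : (6 <= N)%nat -> (j < k <= N)%nat ->
  (x_ N k - x_ N j) / 4 <= cos_weight N k - cos_weight N j.
Proof.
  intros HN Hjk.
  assert (Hn : 6 <= INR N) by (replace 6 with (INR 6) by (simpl; ring); apply le_INR, HN).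
  assert (Hp : 0 < / INR N <= / 6)
    by (split; [apply Rinv_0_lt_compat | apply Rinv_le_contravar]; lra).
  assert (Hs : / 2 <= / S_ N <= 1).
  { destruct (S_bounds N ltac:(lia)).
    split; [| rewrite <- Rinv_1]; apply Rinv_le_contravar; lra. }
  assert (Hxj := x_bounds N j ltac:(lia) ltac:(lia)).
  assert (Hxk := x_bounds N k ltac:(lia) ltac:(lia)).
  assert (Hjk' := x_increasing N j k ltac:(lia) ltac:(lia)).
  assert (Hck : 1 - x_ N k <= cos (x_ N k)).
  { assert (H := cos_lipschitz (x_ N k) 0). rewrite cos_0, Rminus_0_r in H.
    rewrite (Rabs_right (x_ N k)) in H by lra. apply Rabs_le_between in H. lra. }
  assert (Hcjk : cos (x_ N j) - cos (x_ N k) <= x_ N k - x_ N j).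
  { assert (H := cos_lipschitz (x_ N j) (x_ N k)).
    rewrite (Rabs_minus_sym (x_ N j)), (Rabs_right (x_ N k - x_ N j)) in H by lra.
    apply Rabs_le_between in H. lra. }
  unfold cos_weight. rewrite !lam_eq_x by lia.
  set (p := / INR N) in *. set (s := / S_ N) in *.
  set (xj := x_ N j) in *. set (xk := x_ N k) in *.
  set (cj := cos xj) in *. set (ck := cos xk) in *.
  assert (Hkey : (xk - xj) / 2 <= (xk - xj) * ck + (p + xj) * (ck - cj)).
  { assert (0 <= (xk - xj) * (ck - (1 - xk))) by (apply Rmult_le_pos; lra).
    assert (0 <= (p + xj) * (ck - cj + (xk - xj))) by (apply Rmult_le_pos; lra).
    assert (0 <= (xk - xj) * (/ 2 - xk - p - xj)) by (apply Rmult_le_pos; lra).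
    lra. }
  unfold Rdiv. replace (/ S_ N) with s by reflexivity.
  replace ((p + xk) * s * ck - (p + xj) * s * cj)
    with (s * ((xk - xj) * ck + (p + xj) * (ck - cj))) by ring.
  nra.
Qed.

Lemma pair_rate_antisym N k j : pair_rate N j k = - pair_rate N k j.
Proof.
  unfold pair_rate. replace (x_ N j - x_ N k) with (- (x_ N k - x_ N j)) by ring.
  unfold Rdiv. rewrite Rinv_opp. ring.
Qed.

Lemma pair_rate_lower_bound N j k : (6 <= N)%nat -> (j < k <= N)%nat ->
  / (2 * INR N) <= pair_rate N k j * (cos_weight N k - cos_weight N j).
Proof.
  intros HN Hjk.
  assert (Hn : 1 <= INR N) by (apply INR_ge_1; lia).
  assert (Hs : / 2 <= / S_ N).
  { destruct (S_bounds N ltac:(lia)). apply Rinv_le_contravar; lra. }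
  assert (Hxj := x_bounds N j ltac:(lia) ltac:(lia)).
  assert (Hxk := x_bounds N k ltac:(lia) ltac:(lia)).
  assert (Hd := x_increasing N j k ltac:(lia) ltac:(lia)).
  assert (Hincr := cos_weight_increment N j k HN Hjk).
  assert (Hlam : / INR N <= lam N k + lam N j).
  { rewrite !lam_eq_x by lia. unfold Rdiv.
    assert (0 < / INR N) by (apply Rinv_0_lt_compat; lra).
    assert (0 <= (/ INR N + x_ N k + (/ INR N + x_ N j)) * (/ S_ N - / 2))
      by (apply Rmult_le_pos; lra).
    lra. }
  assert (Hrate : 0 <= pair_rate N k j).
  { apply Rmult_le_pos; [| left; apply Rinv_0_lt_compat]; lra. }
  apply Rle_trans with (pair_rate N k j * ((x_ N k - x_ N j) / 4));
    [| apply Rmult_le_compat_l; assumption].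
  unfold pair_rate. replace (2 * (lam N k + lam N j) / (x_ N k - x_ N j) * ((x_ N k - x_ N j) / 4))
    with ((lam N k + lam N j) / 2) by (field; lra).
  rewrite Rinv_mult. lra.
Qed.

Definition initial_rate (N : nat) : R :=
  sum_n_m (fun k => cos_weight N k * drift N (fun j _ => x_ N j) k 0) 1 N.

Lemma initial_rate_lower_bound N : (6 <= N)%nat -> (INR N - 1) / 4 <= initial_rate N.
Proof.
  intro HN. assert (Hn : 1 <= INR N) by (apply INR_ge_1; lia).
  unfold initial_rate, drift.
  change (2 * (lam N ?k + lam N ?j) / (x_ N ?k - x_ N ?j)) with (pair_rate N k j).
  rewrite sum_offdiag_antisym by apply pair_rate_antisym.
  replace ((INR N - 1) / 4) with (/ (2 * INR N) * INR N * (INR N - 1) / 2) by (field; lra).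
  apply sum_triangle_lower_bound. intros k j Hjk HkN. apply pair_rate_lower_bound; lia.
Qed.

Lemma drift_at_initial N V k : (forall j, (1 <= j <= N)%nat -> V j 0 = x_ N j) ->
  (1 <= k <= N)%nat -> drift N V k 0 = drift N (fun j _ => x_ N j) k 0.
Proof.
  intros HV Hk. apply sum_n_m_ext_loc. intros j Hj. now rewrite (HV j Hj), (HV k Hk).
Qed.

Lemma is_rderive_int_alpha_sin N V : solves N V ->
  is_rderive (int_alpha N V (fun x => RtoC (sin x))) 0 (RtoC (initial_rate N)).
Proof.
  intros [T [_ HV]].
  assert (HV0 : forall j, (1 <= j <= N)%nat -> V j 0 = x_ N j) by (intros j Hj; apply HV, Hj).
  apply (is_rderive_ext (fun t => RtoC (sum_n_m (fun k => lam N k * sin (V k t)) 1 N))).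
  { intro t. unfold int_alpha. rewrite <- sum_n_m_RtoC.
    apply (sum_n_m_ext (G := C_AbelianMonoid)). intro k. apply RtoC_mult. }
  apply (is_rderive_linear RtoC _ _ _ is_linear_RtoC).
  replace (initial_rate N) with (sum_n_m (fun k => lam N k * cos (V k 0) * drift N V k 0) 1 N).
  - apply is_rderive_sum_n_m. intros k Hk.
    apply (is_rderive_comp (V k) (fun y => lam N k * sin y)); [apply HV, Hk |].
    auto_derive; [exact I | ring].
  - apply sum_n_m_ext_loc. intros k Hk. unfold cos_weight.
    now rewrite (HV0 k Hk), (drift_at_initial N V k HV0 Hk).
Qed.

Theorem mainTheorem3 :
  exists f : R -> C, C2b f /\
    forall V : nat -> nat -> R -> R,
      (forall N : nat, (1 <= N)%nat -> solves N (V N)) ->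
      exists D : nat -> C,
        (forall N : nat, (1 <= N)%nat -> is_rderive (int_alpha N (V N) f) 0 (D N)) /\
        (forall M : R, exists N : nat, (1 <= N)%nat /\ M < Cmod (D N)).
Proof.
  exists (fun x => RtoC (sin x)). split; [exact C2b_sin |].
  intros V HV. exists (fun N => RtoC (initial_rate N)). split.
  - intros N HN. exact (is_rderive_int_alpha_sin N (V N) (HV N HN)).
  - intro M. destruct (INR_unbounded (4 * M + 1)) as [n Hn].
    exists (n + 6)%nat. split; [lia |].
    assert (Hrate := initial_rate_lower_bound (n + 6) ltac:(lia)).
    rewrite plus_INR in Hrate. replace (INR 6) with 6 in Hrate by (simpl; ring).
    rewrite Cmod_R. apply Rlt_le_trans with (initial_rate (n + 6)); [lra | apply Rle_abs].
Qed.
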